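(* Let $m\ge1$, $n\ge0$ and let $\mu$ be a partition with $\ell(\mu)=n+1$ and $\mu_1<m$. Let $\mu^c$ be the complement of $\mu$ in the rectangle $(m^{n+1})$, i.e. $\mu^c_i=m-\mu_{n+2-i}$ for $1\le i\le n+1$. Then $$f_\mu(q,t)-f_{\mu^c}(q,t)=\frac{1}{1-q}\sum_{j=0}^{n}t^j\big(q^{\mu^c_{n+1-j}}-q^{\mu_{n+1-j}}\big).$$
   Context: For a partition $\nu$, $f_\nu(q,t)=\sum_{x\in\nu}q^{a(x)}t^{l(x)}$, where for a box $x=(r,c)$ of $\nu$ the arm is $a(x)=\nu_r-c$ and the leg is $l(x)=\nu'_c-r$. *)

From mathcomp Require Import all_boot all_order all_algebra.
Set Implicit Arguments. Unset Strict Implicit. Unset Printing Implicit Defensive.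
Import GRing.Theory.
Local Open Scope ring_scope.

Definition is_partition (s : seq nat) : bool :=
  sorted geq s && all (fun x => (0 < x)%N) s.

(* 1-indexed parts: part nu i = nu_i (0 if i is out of range). *)
Definition part (nu : seq nat) (i : nat) : nat := nth 0%N nu i.-1.

Definition conjpart (nu : seq nat) (c : nat) : nat :=
  count (fun x => (c <= x)%N) nu.

(* f_nu(q,t) = sum over boxes x=(r,c) of nu of q^{a(x)} t^{l(x)},
   a(x) = nu_r - c, l(x) = nu'_c - r. *)
Definition fpoly (R : comRingType) (nu : seq nat) (q t : R) : R :=
  \sum_(1 <= r < (size nu).+1)
    \sum_(1 <= c < (part nu r).+1)
       q ^+ (part nu r - c) * t ^+ (conjpart nu c - r).

Definition complement (m n : nat) (mu : seq nat) : seq nat :=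
  mkseq (fun i => m - part mu (n.+2 - i.+1))%N n.+1.

From mathcomp Require Import all_boot all_order all_algebra.
From mathcomp Require Import zify ring.
Import GRing.Theory.
Local Open Scope ring_scope.

(* Sort the boxes of a partition nu by their leg d. In row r, the boxes of
   leg d are the columns c with nu_(r+d+1) < c <= nu_(r+d); their arms run
   through consecutive integers, so (1 - q) times their contribution is
   q^(nu_r - nu_(r+d)) - q^(nu_r - nu_(r+d+1)). For the complement mu^c the
   rows come in reverse order, and with the convention mu_0 = m the leg-d
   sums of mu and of mu^c telescope against each other, leaving only the
   terms q^(m - mu_(d+1)) = q^(mu^c_(n+1-d)) and q^(mu_(n+1-d)). *)

Lemma sorted_geq_nth (s : seq nat) (i j : nat) : sorted geq s -> (i <= j)%N ->
  (nth 0 s j <= nth 0 s i)%N.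
Proof.
move=> s_sorted le_ij; have [lt_j|] := ltnP j (size s); last by move/(nth_default 0)->.
apply: (sorted_leq_nth (fun a b c ba cb => leq_trans cb ba) (fun a => leqnn a)) => //.
by rewrite inE (leq_ltn_trans le_ij).
Qed.

Lemma part_antimono (s : seq nat) (i j : nat) : sorted geq s ->
  (0 < i <= j)%N -> (part s j <= part s i)%N.
Proof. by move=> s_sorted /andP[i_gt0 le_ij]; apply: sorted_geq_nth => //; lia. Qed.

Lemma part_default (s : seq nat) (i : nat) : (size s < i)%N -> part s i = 0%N.
Proof. by move=> lt_si; rewrite /part nth_default //; lia. Qed.

Lemma conjpart_eq (nu : seq nat) (k c : nat) : sorted geq nu ->
  (0 < k <= size nu)%N -> (part nu k.+1 < c <= part nu k)%N ->
  conjpart nu c = k.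
Proof.
move=> nu_sorted /andP[k_gt0 le_k] /andP[lt_c le_c].
rewrite /conjpart -(cat_take_drop k nu) count_cat.
have -> : count (fun x => c <= x)%N (take k nu) = k.
  apply/eqP; rewrite -{2}(size_takel le_k) -all_count.
  apply/(all_nthP 0) => i; rewrite size_takel // => lt_ik; rewrite nth_take //.
  by apply: leq_trans le_c _; apply: sorted_geq_nth => //; lia.
rewrite -[RHS]addn0; congr (_ + _)%N; apply/eqP; rewrite -leqn0 leqNgt -has_count.
apply/hasPn => x /(nthP 0) [i _ <-]; rewrite nth_drop -ltnNge.
by apply: leq_ltn_trans lt_c; apply: sorted_geq_nth => //; lia.
Qed.

Lemma big_nat_blocks (V : nmodType) (g : nat -> nat) (F : nat -> V) (n : nat) :
  (forall i j, (i <= j)%N -> (g j <= g i)%N) ->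
  \sum_(g n <= c < g 0) F c = \sum_(0 <= d < n) \sum_(g d.+1 <= c < g d) F c.
Proof.
move=> g_anti; elim: n => [|n IHn]; first by rewrite !big_geq.
rewrite big_nat_recr //= -IHn addrC -big_cat_nat //; exact: g_anti.
Qed.

Section LegDecomposition.
Variables (R : comRingType) (q t : R).

Lemma geometric_sum_rev (N a b : nat) : (a <= b <= N)%N ->
  (1 - q) * \sum_(a <= c < b) q ^+ (N - c.+1) = q ^+ (N - b) - q ^+ (N - a).
Proof.
move=> /andP[le_ab le_bN]; rewrite mulr_sumr.
apply: (telescope_sumr_eq (fun c => q ^+ (N - c))) => // c /andP[_ lt_cb].
have -> : (N - c = (N - c.+1).+1)%N by lia.
by rewrite exprS mulrBl mul1r mulrC.
Qed.

Lemma row_sum_leg (nu : seq nat) (r : nat) : sorted geq nu -> (0 < r <= size nu)%N ->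
  (1 - q) * \sum_(1 <= c < (part nu r).+1) q ^+ (part nu r - c) * t ^+ (conjpart nu c - r) =
  \sum_(0 <= d < (size nu).+1 - r)
     t ^+ d * (q ^+ (part nu r - part nu (r + d)%N) - q ^+ (part nu r - part nu (r + d)%N.+1)).
Proof.
move=> nu_sorted /andP[r_gt0 le_r].
pose g d := part nu (r + d).
have g_anti i j : (i <= j)%N -> (g j <= g i)%N.
  by move=> le_ij; apply: part_antimono => //; lia.
have g0 : g 0%N = part nu r by rewrite /g addn0.
have g_end : g ((size nu).+1 - r)%N = 0%N by apply: part_default; lia.
rewrite big_add1 /= -{1 2}g0 -[X in \sum_(X <= _ < _) _]g_end big_nat_blocks //.
rewrite mulr_sumr; apply: eq_big_nat => d /andP[_ lt_d].
rewrite (@eq_big_nat _ _ _ _ _ _ (fun c => q ^+ (g 0%N - c.+1) * t ^+ d)); last first.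
  move=> c; rewrite /g addnS => lt_c.
  by rewrite (@conjpart_eq _ (r + d)) ?addKn //; lia.
by rewrite -big_distrl /= mulrA mulrC geometric_sum_rev ?g_anti // g0 /g addnS.
Qed.

(* For p = part nu and L = size nu: (1 - q) times the sum of q^arm over the
   boxes of leg d. *)
Definition leg_sum (p : nat -> nat) (L d : nat) : R :=
  \sum_(1 <= r < (L - d).+1) (q ^+ (p r - p (r + d)%N) - q ^+ (p r - p (r + d)%N.+1)).

Lemma eq_leg_sum (p p' : nat -> nat) (L d : nat) :
  (forall i, (0 < i)%N -> p i = p' i) -> leg_sum p L d = leg_sum p' L d.
Proof.
move=> eq_pp'; apply: eq_big_nat => r /andP[r_gt0 _].
by rewrite !eq_pp' //; lia.
Qed.

Lemma fpoly_leg_sum (nu : seq nat) : sorted geq nu ->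
  (1 - q) * fpoly nu q t = \sum_(0 <= d < size nu) t ^+ d * leg_sum (part nu) (size nu) d.
Proof.
move=> nu_sorted; rewrite /fpoly mulr_sumr.
under eq_big_nat => r r_row.
  rewrite row_sum_leg // (big_nat_widen _ _ (size nu)); last by lia.
over.
rewrite (exchange_big_dep_nat xpredT) //=; apply: eq_big_nat => d lt_d.
rewrite -big_distrr /= /leg_sum [in RHS](big_nat_widen _ _ (size nu).+1); last by lia.
by apply: congr1; apply: eq_bigl => r; apply/idP/idP; lia.
Qed.

Lemma leg_sum_complement (P Pc : nat -> nat) (m L d : nat) :
  (forall i j, (i <= j)%N -> (P j <= P i)%N) -> (P 0 <= m)%N ->
  (forall i, (0 < i <= L.+1)%N -> Pc i = m - P (L.+1 - i))%N -> (d < L)%N ->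
  leg_sum P L d - leg_sum Pc L d = q ^+ (P 0 - P d.+1)%N - q ^+ (P (L - d) - P L.+1)%N.
Proof.
move=> P_anti P0_le Pc_def lt_dL.
have P_le i : (P i <= m)%N := leq_trans (P_anti 0%N i (leq0n i)) P0_le.
have -> : leg_sum Pc L d =
    \sum_(1 <= r < (L - d).+1) (q ^+ (P r - P (r + d)%N) - q ^+ (P r.-1 - P (r + d)%N)).
  rewrite /leg_sum big_nat_rev; apply: eq_big_nat => r /andP[r_gt0 lt_r] /=.
  rewrite !Pc_def; try lia.
  have -> : (L.+1 - (1 + (L - d).+1 - r.+1) = r + d)%N by lia.
  have -> : (L.+1 - (1 + (L - d).+1 - r.+1 + d) = r)%N by lia.
  have -> : (L.+1 - (1 + (L - d).+1 - r.+1 + d).+1 = r.-1)%N by lia.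
  have := P_anti r (r + d)%N (leq_addr _ _); have := P_anti r.-1 (r + d)%N ltac:(lia).
  have := P_le r; have := P_le r.-1; move=> le_r1m le_rm le_r1 le_r.
  by congr (q ^+ _ - q ^+ _); lia.
rewrite /leg_sum -sumrB (telescope_sumr_eq (fun r => - q ^+ (P r.-1 - P (r + d)%N))) //.
  by rewrite /= (_ : (L - d).+1 + d = L.+1)%N; [ring | lia].
by move=> r _; rewrite addSn /=; ring.
Qed.
End LegDecomposition.

Definition extpart (m : nat) (mu : seq nat) (i : nat) : nat :=
  if i == 0%N then m else part mu i.

Lemma extpart_pos (m : nat) (mu : seq nat) (i : nat) : (0 < i)%N ->
  extpart m mu i = part mu i.
Proof. by rewrite /extpart; case: eqP => // ->. Qed.

Lemma extpart_antimono (m : nat) (mu : seq nat) : sorted geq mu -> (part mu 1 <= m)%N ->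
  forall i j, (i <= j)%N -> (extpart m mu j <= extpart m mu i)%N.
Proof.
move=> mu_sorted mu1_le i j le_ij; rewrite /extpart.
case: eqP => [j0|j_neq0]; case: eqP => [i0|i_neq0]; try lia.
  by apply: leq_trans _ mu1_le; apply: part_antimono => //; lia.
by apply: part_antimono => //; lia.
Qed.

Lemma part_complement (m n : nat) (mu : seq nat) (i : nat) : (0 < i <= n.+2)%N ->
  part (complement m n mu) i = (m - extpart m mu (n.+2 - i))%N.
Proof.
move=> /andP[i_gt0 le_i]; have [lt_i|ge_i] := ltnP i n.+2.
  rewrite /part nth_mkseq ?extpart_pos; try lia.
  by congr (m - part mu _)%N; lia.
have -> : i = n.+2 by lia.
by rewrite subnn subnn part_default // size_mkseq.
Qed.

Lemma complement_sorted (m n : nat) (mu : seq nat) : sorted geq mu ->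
  sorted geq (complement m n mu).
Proof.
move=> mu_sorted; apply/(sortedP 0%N) => i; rewrite size_mkseq => lt_i.
rewrite /complement !nth_mkseq; try lia.
by apply: leq_sub2l; apply: part_antimono => //; lia.
Qed.

Theorem mainTheorem14 (R : fieldType) (m n : nat) (mu : seq nat)
  (hm : (1 <= m)%N) (hmu : is_partition mu) (hlen : size mu = n.+1)
  (hmu1 : (part mu 1 < m)%N) (q t : R) (hq : q != 1) :
  fpoly mu q t - fpoly (complement m n mu) q t =
  (1 - q)^-1 * \sum_(0 <= j < n.+1)
     t ^+ j * (q ^+ part (complement m n mu) (n.+1 - j)
               - q ^+ part mu (n.+1 - j)).
Proof.
have mu_sorted : sorted geq mu by case/andP: hmu.
have q1_neq0 : 1 - q != 0 by rewrite subr_eq0 eq_sym.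
apply: (mulfI q1_neq0); rewrite mulrA mulfV // mul1r mulrBr.
rewrite !fpoly_leg_sum ?complement_sorted // size_mkseq hlen -sumrB.
apply: eq_big_nat => d /andP[_ lt_d]; rewrite -mulrBr; congr (_ * _).
rewrite (@eq_leg_sum _ _ _ (extpart m mu)) => [|i i_gt0]; last by rewrite extpart_pos.
rewrite (@leg_sum_complement _ _ _ _ m) //; last 2 first.
- exact: extpart_antimono (ltnW hmu1).
- by move=> i /andP[i_gt0 le_i]; rewrite part_complement ?i_gt0.
rewrite part_complement; last by lia.
rewrite (_ : extpart m mu 0 = m) // !extpart_pos ?(@part_default mu n.+2) ?hlen //; try lia.
by rewrite subn0 (_ : n.+2 - (n.+1 - d) = d.+1)%N //; lia.
Qed.
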